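(* Let $R$ and $S$ be commutative rings with identity, $f:R\to S$ a ring homomorphism, and $J$ a nonzero proper ideal of $S$. (1) If $J\subseteq\operatorname{Jac}(S)$, then $R\bowtie^f J$ is a pm-ring if and only if $R$ is a pm-ring. (2) For any $R$-module $M$, the trivial extension $R\ltimes M$ is a pm-ring if and only if $R$ is a pm-ring.
   Context: $R\bowtie^f J:=\{(r,f(r)+j)\mid r\in R,\ j\in J\}$, a subring of $R\times S$. $\operatorname{Jac}(S)$ is the Jacobson radical of $S$. The trivial extension $R\ltimes M$ is the ring $R\oplus M$ with multiplication $(r,m)(r',m')=(rr',rm'+r'm)$. A commutative ring is a pm-ring if every prime ideal is contained in a unique maximal ideal. *)

From HB Require Import structures.
From mathcomp Require Import all_boot all_order all_algebra.
Set Implicit Arguments. Unset Strict Implicit. Unset Printing Implicit Defensive.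
Import GRing.Theory.
Local Open Scope ring_scope.

(* ---------- Ideals of a subring A of a commutative ring T ----------
   Sets are Prop-valued predicates T -> Prop.  Taking A = (fun _ => True)
   gives the usual notions for the ring T itself. *)
Section Ideals.
Variable T : comPzRingType.

Definition subring_of (A : T -> Prop) : Prop :=
  [/\ A 0, A 1, (forall x y, A x -> A y -> A (x - y)) &
      (forall x y, A x -> A y -> A (x * y))].

Definition ideal_in (A I : T -> Prop) : Prop :=
  [/\ (forall x, I x -> A x), I 0,
      (forall x y, I x -> I y -> I (x + y)) &
      (forall a x, A a -> I x -> I (a * x))].

Definition prime_ideal_in (A P : T -> Prop) : Prop :=
  [/\ ideal_in A P, ~ P 1 &
      (forall a b, A a -> A b -> P (a * b) -> P a \/ P b)].

Definition maximal_ideal_in (A Mx : T -> Prop) : Prop :=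
  [/\ ideal_in A Mx, ~ Mx 1 &
      (forall K, ideal_in A K -> (forall x, Mx x -> K x) ->
         (forall x, K x <-> Mx x) \/ K 1)].

Definition pm_subring (A : T -> Prop) : Prop :=
  forall P, prime_ideal_in A P ->
    exists Mx, [/\ maximal_ideal_in A Mx, (forall x, P x -> Mx x) &
      forall Mx', maximal_ideal_in A Mx' -> (forall x, P x -> Mx' x) ->
        forall x, Mx' x <-> Mx x].

End Ideals.

Definition fullset (T : Type) : T -> Prop := fun _ => True.

Definition ideal (T : comPzRingType) (I : T -> Prop) := ideal_in (@fullset T) I.
Definition maximal_ideal (T : comPzRingType) (I : T -> Prop) :=
  maximal_ideal_in (@fullset T) I.
Definition pm_ring (T : comPzRingType) : Prop := pm_subring (@fullset T).

Definition Jac (T : comPzRingType) : T -> Prop :=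
  fun x => forall Mx, maximal_ideal Mx -> Mx x.

Definition amalgamation (R S : comPzRingType) (f : {rmorphism R -> S})
  (J : S -> Prop) : (R * S)%type -> Prop :=
  fun x => exists r j, J j /\ x = (r, f r + j).

Definition triv_ext (R : comPzRingType) (M : lmodType R) : Type := (R * M)%type.

Section TrivExt.
Variables (R : comPzRingType) (M : lmodType R).
Local Notation TE := (triv_ext M).

HB.instance Definition _ := GRing.Zmodule.on TE.

Definition te_one : TE := (1, 0).
Definition te_mul (x y : TE) : TE := (x.1 * y.1, x.1 *: y.2 + y.1 *: x.2).

Lemma te_mulA : associative te_mul.
Proof.
case=> [a m] [b n] [c p]; rewrite /te_mul /=; congr pair; first by rewrite mulrA.
rewrite !scalerDr !scalerA (mulrC c a) (mulrC c b).
by rewrite addrA.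
Qed.

Lemma te_mulC : commutative te_mul.
Proof. by case=> [a m] [b n]; rewrite /te_mul /= mulrC addrC. Qed.

Lemma te_mul1 : left_id te_one te_mul.
Proof. by case=> [a m]; rewrite /te_mul /= mul1r scale1r scaler0 addr0. Qed.

Lemma te_mulDl : left_distributive te_mul +%R.
Proof.
case=> [a m] [b n] [c p]; rewrite /te_mul /=; congr pair; first by rewrite mulrDl.
by rewrite scalerDl scalerDr !addrA; congr (_ + _); rewrite -!addrA; congr (_ + _);
  rewrite addrC.
Qed.

HB.instance Definition _ := GRing.Zmodule_isComPzRing.Build TE
  te_mulA te_mulC te_mul1 te_mulDl.
End TrivExt.

(* Each of A = R |><|^f J and A = R |x M retracts onto R: the first
   projection pi : A -> R is a ring map with section r |-> (r, f r), resp.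
   r |-> (r, 0), and every a in A with pi a = 1 is a unit of A (1 + j is a
   unit for j in J <= Jac S, and (1, m) (1, -m) = 1 in R |x M).  So ker pi
   lies in Jac A, whence every maximal ideal of A contains ker pi and pi,
   pi^-1 are inverse bijections between the maximal ideals of A and of R.
   A prime q of R pulls back along pi, and a prime P of A pulls back along
   the section to a prime of R whose maximal ideals are the images of those
   over P; so uniqueness of the maximal ideal over a prime transfers in both
   directions. *)

From HB Require Import structures.
From mathcomp Require Import all_boot all_order all_algebra.
From mathcomp Require Import boolp classical_sets.
Set Implicit Arguments. Unset Strict Implicit. Unset Printing Implicit Defensive.
Import GRing.Theory.
Local Open Scope ring_scope.

Section Krull.
Variables (T : comPzRingType) (A I : T -> Prop).

Let proper_over_I (X : T -> Prop) := [/\ ideal_in A X, ~ X 1 & forall x, I x -> X x].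

(* [set0] is allowed so that the empty chain, whose union is [set0], is bounded. *)

Let bigcup_chain_proper_over_I (F : set (set T)) :
  (forall X, F X -> X = set0 \/ proper_over_I X) -> total_on F subset ->
  let U := (\bigcup_(X in F) X)%classic in U = set0 \/ proper_over_I U.
Proof.
move=> FP Ftot U.
have inF X x : F X -> X x -> proper_over_I X.
  by move=> FX Xx; case: (FP X FX) => // X0; rewrite X0 in Xx.
have [[X0 FX0 PX0]|noP] := pselect (exists2 X, F X & proper_over_I X); last first.
  left; apply/seteqP; split => // x [X FX Xx].
  by apply: noP; exists X => //; exact: inF Xx.
have [[_ X00 _ _] _ IX0] := PX0.
right; split; last 2 first.
- by case=> X FX /[dup] /(inF _ _ FX) [].
- by move=> x Ix; exists X0 => //; exact: IX0.
split.
- by move=> x [X FX Xx]; have [[XA _ _ _] _ _] := inF _ _ FX Xx; exact: XA.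
- by exists X0.
- move=> x y [X FX Xx] [Y FY Yy].
  have [[_ _ XD _] _ _] := inF _ _ FX Xx; have [[_ _ YD _] _ _] := inF _ _ FY Yy.
  have [XY|YX] := Ftot X Y FX FY.
  + by exists Y => //; apply: YD => //; exact: XY.
  + by exists X => //; apply: XD => //; exact: YX.
- move=> a x Aa [X FX Xx]; have [[_ _ _ XM] _ _] := inF _ _ FX Xx.
  by exists X => //; exact: XM.
Qed.

Lemma proper_ideal_in_maximal :
  ideal_in A I -> ~ I 1 ->
  exists2 M, maximal_ideal_in A M & forall x, I x -> M x.
Proof.
move=> idI nI1.
have [X [PX maxX]] := Zorn_bigcup bigcup_chain_proper_over_I.
have {PX} [idX nX1 IX] : proper_over_I X.
  case: PX => // X0; exfalso; apply: (maxX I); last by right.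
  rewrite X0; split => // noI; have [_ I0 _ _] := idI; exact: noI 0 I0.
exists X => //; split => // K idK XK.
have [K1|nK1] := pselect (K 1); [by right | left => x; split; last exact: XK].
move=> Kx; apply: contrapT => nXx; apply: (maxX K); last first.
  by right; split => // y /IX /XK.
by split => // XeqK; apply: nXx; exact: XeqK.
Qed.

End Krull.

Section PmTransfer.
Variables (T R : comPzRingType) (A : T -> Prop).
Variables (pi : {rmorphism T -> R}) (sg : {rmorphism R -> T}).
Hypotheses (subA : subring_of A) (sgA : forall r, A (sg r)) (sgK : cancel sg pi).
(* Equivalently, the kernel of [pi] on [A] lies in the Jacobson radical of [A]. *)
Hypothesis pi1_unit : forall a, A a -> pi a = 1 -> exists2 b, A b & a * b = 1.

Let AD x y : A x -> A y -> A (x + y).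
Proof.
move=> Ax Ay; case: subA => A0 _ AB _.
have -> : x + y = x - (0 - y) by rewrite sub0r opprK.
by apply: (AB) => //; exact: AB.
Qed.

Let AM x y : A x -> A y -> A (x * y).
Proof. by case: subA => _ _ _; apply. Qed.

Let img (I : T -> Prop) : R -> Prop := fun r => exists2 x, I x & pi x = r.
Let pre (q : R -> Prop) : T -> Prop := fun x => A x /\ q (pi x).

Let img_pi I x : I x -> img I (pi x).
Proof. by exists x. Qed.

Let img_sg I r : I (sg r) -> img I r.
Proof. by rewrite -{2}[r]sgK; exact: img_pi. Qed.

Let pre_sg q r : q r -> pre q (sg r).
Proof. by split; rewrite ?sgK. Qed.

Let ideal_img I : ideal_in A I -> ideal (img I).
Proof.
case=> IA I0 ID IM; split => //.
- by exists 0; rewrite ?rmorph0.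
- by move=> _ _ [x Ix <-] [y Iy <-]; exists (x + y); rewrite ?rmorphD //; exact: ID.
- move=> a _ _ [x Ix <-]; exists (sg a * x); first exact: IM.
  by rewrite rmorphM sgK.
Qed.

Let img_proper I : ideal_in A I -> ~ I 1 -> ~ img I 1.
Proof.
case=> IA _ _ IM nI1 [x Ix /(pi1_unit (IA _ Ix))] [b Ab xb].
by apply: nI1; rewrite -xb mulrC; exact: IM.
Qed.

Let ideal_pre q : ideal q -> ideal_in A (pre q).
Proof.
have [A0 _ _ _] := subA.
case=> _ q0 qD qM; split.
- by move=> x [].
- by split; rewrite ?rmorph0.
- by move=> x y [Ax qx] [Ay qy]; split; [exact: AD | rewrite rmorphD; exact: qD].
- by move=> a x Aa [Ax qx]; split; [exact: AM | rewrite rmorphM; exact: qM].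
Qed.

Let pre_proper q : ~ q 1 -> ~ pre q 1.
Proof. by move=> nq1 [_]; rewrite rmorph1. Qed.

Let prime_pre q : prime_ideal_in (@fullset R) q -> prime_ideal_in A (pre q).
Proof.
case=> idq nq1 qP; split; [exact: ideal_pre | exact: pre_proper |].
by move=> a b Aa Ab [_]; rewrite rmorphM => /qP[] // ?; [left | right].
Qed.

Let prime_comp_sg P :
  prime_ideal_in A P -> prime_ideal_in (@fullset R) (fun r => P (sg r)).
Proof.
case=> [[_ P0 PD PM] nP1 PP]; split.
- split => //; first by rewrite rmorph0.
  + by move=> x y Px Py; rewrite rmorphD; exact: PD.
  + by move=> a x _ Px; rewrite rmorphM; exact: PM.
- by rewrite rmorph1.
- by move=> a b _ _; rewrite rmorphM => /PP; apply.
Qed.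

Let maximal_img M : maximal_ideal_in A M -> maximal_ideal (img M).
Proof.
case=> idM nM1 maxM; split; [exact: ideal_img | exact: img_proper |].
move=> K idK MK; have [MA _ _ _] := idM.
have [preKM|] := maxM _ (ideal_pre idK) (fun x Mx => conj (MA x Mx) (MK _ (img_pi Mx))).
  by left=> r; split=> [/pre_sg/preKM/img_sg|/MK].
by case; rewrite rmorph1; right.
Qed.

Let pre_imgE M : maximal_ideal_in A M -> forall x, pre (img M) x <-> M x.
Proof.
case=> idM nM1 maxM; have [MA _ _ _] := idM.
have [//|] := maxM _ (ideal_pre (ideal_img idM)) (fun x Mx => conj (MA x Mx) (img_pi Mx)).
by case=> _; rewrite rmorph1 => /(img_proper idM nM1).
Qed.

Let maximal_pre m : maximal_ideal m -> maximal_ideal_in A (pre m).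
Proof.
case=> idm nm1 maxm; split; [exact: ideal_pre | exact: pre_proper |].
move=> K idK mK; have [KA _ _ _] := idK.
have [imgKm|] := maxm _ (ideal_img idK) (fun r mr => img_sg (mK _ (pre_sg mr))).
  by left=> x; split=> [Kx | /mK //]; split; [exact: KA | apply/imgKm/img_pi].
by move=> imgK1; right; apply: contrapT => /(img_proper idK); apply.
Qed.

Lemma pm_subring_pm_ring : pm_subring A -> pm_ring R.
Proof.
move=> pmA q primeq.
have [M [maxM preqM uniqM]] := pmA _ (prime_pre primeq).
exists (img M); split; first exact: maximal_img.
  by move=> r /pre_sg/preqM/img_sg.
move=> m' maxm' qm' r.
have m'M := uniqM _ (maximal_pre maxm') (fun x '(conj Ax qx) => conj Ax (qm' _ qx)).
split=> [/pre_sg/m'M/img_sg | [x /m'M[_ m'x] <-]] //.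
Qed.

Lemma pm_ring_pm_subring : pm_ring R -> pm_subring A.
Proof.
move=> pmR P primeP.
have [m [maxm Pm uniqm]] := pmR _ (prime_comp_sg primeP).
have [idP nP1 _] := primeP.
have imgE N : maximal_ideal_in A N -> (forall x, P x -> N x) -> forall r, img N r <-> m r.
  by move=> maxN PN; apply: uniqm (maximal_img maxN) _ => r /PN/img_sg.
have [M maxM PM] := proper_ideal_in_maximal idP nP1.
exists M; split=> // M' maxM' PM' x.
rewrite -(pre_imgE maxM') -(pre_imgE maxM) /pre.
by rewrite (imgE _ maxM' PM') (imgE _ maxM PM).
Qed.

Lemma pm_subring_retract : pm_subring A <-> pm_ring R.
Proof. by split; [exact: pm_subring_pm_ring | exact: pm_ring_pm_subring]. Qed.

End PmTransfer.

Lemma Jac_add1_invertible (S : comPzRingType) (j : S) :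
  Jac j -> exists u, (1 + j) * u = 1.
Proof.
move=> Jacj; pose I x := exists s, x = (1 + j) * s.
have idI : ideal I.
  split => //.
  - by exists 0; rewrite mulr0.
  - by move=> _ _ [s ->] [t ->]; exists (s + t); rewrite mulrDr.
  - by move=> a _ _ [s ->]; exists (a * s); rewrite mulrCA.
have [[u /esym]|nI1] := pselect (I 1); first by exists u.
have [M maxM IM] := proper_ideal_in_maximal idI nI1.
have [[_ _ MD MM] nM1 _] := maxM; case: nM1.
rewrite -(addrK j 1) -mulN1r; apply: MD; last exact: MM (Jacj _ maxM).
by apply: IM; exists 1; rewrite mulr1.
Qed.

Definition amalg_graph (R S : comPzRingType) (f : {rmorphism R -> S}) (r : R) :
  R * S := (r, f r).

Section AmalgGraph.
Variables (R S : comPzRingType) (f : {rmorphism R -> S}).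

Fact amalg_graph_is_zmod_morphism : zmod_morphism (amalg_graph f).
Proof. by move=> r s; rewrite /amalg_graph rmorphB. Qed.

Fact amalg_graph_is_monoid_morphism : monoid_morphism (amalg_graph f).
Proof. by split=> [|r s]; rewrite /amalg_graph ?rmorph1 ?rmorphM. Qed.

HB.instance Definition _ :=
  GRing.isZmodMorphism.Build R (R * S)%type (amalg_graph f) amalg_graph_is_zmod_morphism.
HB.instance Definition _ :=
  GRing.isMonoidMorphism.Build R (R * S)%type (amalg_graph f) amalg_graph_is_monoid_morphism.

End AmalgGraph.

Section Amalgamation.
Variables (R S : comPzRingType) (f : {rmorphism R -> S}) (J : S -> Prop).
Hypothesis idJ : ideal J.

Let JD j k : J j -> J k -> J (j + k).
Proof. by have [_ _ JD _] := idJ; exact: JD. Qed.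

Let JMl a j : J j -> J (a * j).
Proof. by have [_ _ _ JM] := idJ; exact: JM. Qed.

Lemma amalgamation_subring : subring_of (amalgamation f J).
Proof.
have [_ J0 _ _] := idJ.
split.
- by exists 0, 0; rewrite rmorph0 addr0.
- by exists 1, 0; rewrite rmorph1 addr0.
- move=> _ _ [r [j [Jj ->]]] [s [k [Jk ->]]]; exists (r - s), (j - k).
  split; first by rewrite -mulN1r; exact/JD/JMl.
  by congr pair; rewrite /= rmorphB opprD addrACA.
- move=> _ _ [r [j [Jj ->]]] [s [k [Jk ->]]]; exists (r * s), (f r * k + j * (f s + k)).
  split; first by apply: JD; [exact: JMl | rewrite mulrC; exact: JMl].
  by congr pair; rewrite /= rmorphM mulrDl mulrDr addrA.
Qed.

Lemma amalgamation_graph r : amalgamation f J (amalg_graph f r).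
Proof. by have [_ J0 _ _] := idJ; exists r, 0; rewrite addr0. Qed.

Lemma amalgamation_fst1_unit (a : R * S) :
  (forall x, J x -> Jac x) -> amalgamation f J a -> a.1 = 1 ->
  exists2 b, amalgamation f J b & a * b = 1.
Proof.
move=> JJac [r [j [Jj ->]]] /= r1; subst r; rewrite rmorph1.
have [u ju1] := Jac_add1_invertible (JJac _ Jj).
exists (1, u); last by congr pair; rewrite /= ?mulr1.
exists 1, (- u * j); split; first exact: JMl.
by rewrite rmorph1 mulNr -{1}ju1 mulrDl mul1r (mulrC j) addrK.
Qed.

End Amalgamation.

Section TrivExtMorphisms.
Variables (R : comPzRingType) (M : lmodType R).

Definition te_fst (x : triv_ext M) : R := x.1.
Definition te_embed (r : R) : triv_ext M := (r, 0).

Fact te_fst_is_zmod_morphism : zmod_morphism te_fst. Proof. by []. Qed.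
Fact te_fst_is_monoid_morphism : monoid_morphism te_fst. Proof. by []. Qed.

Fact te_embed_is_zmod_morphism : zmod_morphism te_embed.
Proof. by move=> r s; rewrite /te_embed; congr pair; rewrite /= subr0. Qed.

Fact te_embed_is_monoid_morphism : monoid_morphism te_embed.
Proof. by split=> // r s; congr pair; rewrite /= !scaler0 addr0. Qed.

HB.instance Definition _ :=
  GRing.isZmodMorphism.Build (triv_ext M) R te_fst te_fst_is_zmod_morphism.
HB.instance Definition _ :=
  GRing.isMonoidMorphism.Build (triv_ext M) R te_fst te_fst_is_monoid_morphism.
HB.instance Definition _ :=
  GRing.isZmodMorphism.Build R (triv_ext M) te_embed te_embed_is_zmod_morphism.
HB.instance Definition _ :=
  GRing.isMonoidMorphism.Build R (triv_ext M) te_embed te_embed_is_monoid_morphism.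

Lemma te_fst1_unit (x : triv_ext M) : te_fst x = 1 -> x * (1, - x.2) = 1.
Proof.
by case: x => _ m /= ->; congr pair; rewrite /= ?mulr1 // !scale1r addNr.
Qed.

End TrivExtMorphisms.

Lemma pm_amalgamation (R S : comPzRingType) (f : {rmorphism R -> S}) (J : S -> Prop) :
  ideal J -> (forall x, J x -> Jac x) ->
  (pm_subring (amalgamation f J) <-> pm_ring R).
Proof.
move=> idJ JJac; apply: (pm_subring_retract (pi := fst) (sg := amalg_graph f)) => //.
- exact: amalgamation_subring.
- exact: amalgamation_graph.
- by move=> a; exact: amalgamation_fst1_unit.
Qed.

Lemma pm_triv_ext (R : comPzRingType) (M : lmodType R) :
  pm_ring (triv_ext M) <-> pm_ring R.
Proof.
apply: (pm_subring_retract (pi := @te_fst R M) (sg := @te_embed R M)) => //.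
by move=> x _ /te_fst1_unit; exists (1, - x.2).
Qed.

Theorem corollary3p6 :
  (forall (R S : comPzRingType) (f : {rmorphism R -> S}) (J : S -> Prop),
     ideal J -> (exists j, J j /\ j <> 0) -> ~ J 1 ->
     (forall x, J x -> Jac x) ->
     (pm_subring (amalgamation f J) <-> pm_ring R))
  /\
  (forall (R : comPzRingType) (M : lmodType R),
     pm_ring (triv_ext M) <-> pm_ring R).
Proof.
split; last exact: pm_triv_ext.
by move=> R S f J idJ _ _ JJac; exact: pm_amalgamation.
Qed.
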